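(* Let $t$ be the total number of attribute values. The Random Walk Sampling algorithm (starting from a matching context $C_V$, repeatedly choose uniformly at random, without replacement, a context connected to the current one until a matching one is found, append it to the sample multiset $C_M$ and move to it, until $n$ samples are collected; then output $\mathrm{Exp}^{\epsilon_1}_u(D,C_M)$) has computational complexity $\mathcal O(t)$.
   Context: Dataset $D$ over categorical attributes $A_1,\dots,A_m$ with domain sizes $|A_i|$, $t=\sum_i|A_i|$. A context is a binary vector of length $t$ selecting a subset of values per attribute; $D_C$ is its population in $D$. Two contexts are connected if their Hamming distance is $1$ (so each context has $t$ connected contexts). A context $C$ is matching if $f_M(D_C,V)=\mathrm{true}$, where $f_M$ is a deterministic outlier verification for record $V$ w.r.t. metric $M$. $\mathrm{Exp}^{\epsilon}_u$ is the Exponential mechanism selecting from a set with probability proportional to $\exp(\epsilon u/(2\Delta u))$. The number of samples $n$ is treated as a constant; complexity counts outlier-verification calls and mechanism evaluations. *)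

From mathcomp Require Import all_boot.
Set Implicit Arguments. Unset Strict Implicit. Unset Printing Implicit Defensive.

Section RWS.
Variables (m : nat) (s : 'I_m -> nat).

(* An attribute value: attribute i together with one of its |A_i| values.
   There are t = \sum_i |A_i| of them. *)
Definition Pos : finType := {i : 'I_m & 'I_(s i)}.

(* A context: the binary vector of length t, i.e. the set of selected values. *)
Definition Ctx := {set Pos}.

Definition Rec := {dffun forall i : 'I_m, 'I_(s i)}.

Definition population (D : seq Rec) (C : Ctx) : seq Rec :=
  [seq r <- D | (fun r : Rec => [forall i : 'I_m, (Tagged (fun j => 'I_(s j)) (r i) : Pos) \in C]) r].

Definition matching (fM : seq Rec -> Rec -> bool) (D : seq Rec) (V : Rec)
  (C : Ctx) : bool := fM (population D C) V.

(* The connected context obtained by flipping bit p (Hamming distance 1). *)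
Definition flip (C : Ctx) (p : Pos) : Ctx :=
  if p \in C then C :\ p else p |: C.

Variables (fM : seq Rec -> Rec -> bool) (D : seq Rec) (V : Rec).

(* Examine the connected contexts of C in the (random) order [ord], stopping
   at the first matching one.  Returns the found context (if any) and the
   number of outlier-verification calls performed. *)
Fixpoint scan (C : Ctx) (ord : seq Pos) : option Ctx * nat :=
  match ord with
  | [::] => (None, 0)
  | p :: ord' =>
      if matching fM D V (flip C p) then (Some (flip C p), 1)
      else let: (r, k) := scan C ord' in (r, k.+1)
  end.

(* If no connected context matches, the walk stops. *)
Fixpoint walk (rnd : nat -> seq Pos) (k : nat) (C : Ctx) (j : nat)
  : seq Ctx * nat :=
  match k with
  | 0 => ([::], 0)
  | k'.+1 =>
      match scan C (rnd j) with
      | (Some C', c) => let: (Ss, c2) := walk rnd k' C' j.+1 in (C' :: Ss, c + c2)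
      | (None, c) => ([::], c)
      end
  end.

Definition rws_samples (n : nat) (CV : Ctx) (rnd : nat -> seq Pos) : seq Ctx :=
  (walk rnd n CV 0).1.

(* Total cost of Random Walk Sampling: verification calls of the walk plus
   one evaluation of the Exponential mechanism Exp_u^{eps1}(D, C_M). *)
Definition rws_cost (n : nat) (CV : Ctx) (rnd : nat -> seq Pos) : nat :=
  (walk rnd n CV 0).2 + 1.

End RWS.

From mathcomp Require Import all_boot.

(* Each step of the walk scans every connected context at most once, so it
   costs at most t = #|Pos s| verification calls; n steps plus the single
   Exponential-mechanism evaluation cost at most n * t + 1 <= (n + 1) * t. *)

Lemma card_Pos m (s : 'I_m -> nat) : #|Pos s| = \sum_(i < m) s i.
Proof.
rewrite card_tagged sumnE big_map big_enum /=.
by apply: eq_bigr => i _; rewrite card_ord.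
Qed.

Section WalkCost.
Variables (m : nat) (s : 'I_m -> nat).
Variables (fM : seq (Rec s) -> Rec s -> bool) (D : seq (Rec s)) (V : Rec s).

Lemma scan_cost_le_size (C : Ctx s) (ord : seq (Pos s)) :
  (scan fM D V C ord).2 <= size ord.
Proof.
elim: ord => [|p ord IH] //=; case: ifP => // _.
by case: (scan fM D V C ord) IH.
Qed.

Lemma walk_cost_le (rnd : nat -> seq (Pos s)) (t : nat) :
  (forall j, size (rnd j) <= t) ->
  forall k C j, (walk fM D V rnd k C j).2 <= k * t.
Proof.
move=> size_rnd; elim=> [|k IHk] C j //=.
have scan_le_t := leq_trans (scan_cost_le_size C (rnd j)) (size_rnd j).
case: (scan fM D V C (rnd j)) scan_le_t => [[C'|] c] /= c_le_t.
  have := IHk C' j.+1.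
  case: (walk fM D V rnd k C' j.+1) => Ss c' /= c'_le.
  by rewrite mulSn leq_add.
by rewrite mulSn (leq_trans c_le_t (leq_addr _ _)).
Qed.

End WalkCost.

Theorem theorem7 (n : nat) :
  exists (c t0 : nat),
    forall (m : nat) (s : 'I_m -> nat) (fM : seq (Rec s) -> Rec s -> bool)
           (D : seq (Rec s)) (V : Rec s) (CV : Ctx s)
           (rnd : nat -> seq (Pos s)),
      t0 <= \sum_(i < m) s i ->
      matching fM D V CV ->
      (forall j, perm_eq (rnd j) (enum (Pos s))) ->
      rws_cost fM D V n CV rnd <= c * \sum_(i < m) s i.
Proof.
exists n.+1, 1 => m s fM D V CV rnd t_gt0 _ rnd_perm.
have size_rnd j : size (rnd j) <= \sum_(i < m) s i.
  by rewrite (perm_size (rnd_perm j)) -cardE card_Pos.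
rewrite /rws_cost mulSn addnC leq_add //.
exact: walk_cost_le.
Qed.
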